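(* Let $k\ge\ell>0$ be integers and $d=k-\ell$. Then there is a nonassociative commutative A-loop of order $2^k$ with middle nucleus of order $2^\ell$ if and only if either $d\ge 3$, or $d\ge 1$ and $\ell\ge 2$.
   Context: A loop is a set with a binary operation and a neutral element in which all left and right translations are bijections. Its inner mapping group is generated by $L_{x,y}=L_{yx}^{-1}L_yL_x$, $R_{x,y}=R_{xy}^{-1}R_yR_x$, $T_x=L_x^{-1}R_x$; an A-loop is a loop whose inner mappings are all automorphisms. The middle nucleus is $N_\mu(Q)=\{y:(xy)z=x(yz)\ \forall x,z\}$. *)

From mathcomp Require Import all_boot.
Set Implicit Arguments. Unset Strict Implicit. Unset Printing Implicit Defensive.

Section LoopDefs.
Variable T : finType.
Variable mul : T -> T -> T.

Definition Lt (x : T) : T -> T := fun z => mul x z.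
Definition Rt (x : T) : T -> T := fun z => mul z x.

Definition is_loop (e : T) : Prop :=
  (forall x, mul e x = x /\ mul x e = x) /\
  (forall x, bijective (Lt x)) /\ (forall x, bijective (Rt x)).

(* L_{x,y} = L_{yx}^{-1} L_y L_x ,  R_{x,y} = R_{xy}^{-1} R_y R_x ,  T_x = L_x^{-1} R_x
   (maps act on the left, composition right-to-left) *)
Definition Lxy (x y : T) : T -> T := finv (Lt (mul y x)) \o Lt y \o Lt x.
Definition Rxy (x y : T) : T -> T := finv (Rt (mul x y)) \o Rt y \o Rt x.
Definition Tx (x : T) : T -> T := finv (Lt x) \o Rt x.

Inductive inner_map : (T -> T) -> Prop :=
| inner_L x y : inner_map (Lxy x y)
| inner_R x y : inner_map (Rxy x y)
| inner_T x : inner_map (Tx x)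
| inner_id : inner_map id
| inner_comp f g : inner_map f -> inner_map g -> inner_map (f \o g)
| inner_inv f : inner_map f -> inner_map (finv f).

Definition is_automorphism (f : T -> T) : Prop :=
  bijective f /\ forall x y, f (mul x y) = mul (f x) (f y).

Definition is_Aloop (e : T) : Prop :=
  is_loop e /\ forall f, inner_map f -> is_automorphism f.

Definition is_commutative : Prop := forall x y, mul x y = mul y x.
Definition is_associative : Prop :=
  forall x y z, mul (mul x y) z = mul x (mul y z).

Definition middle_nucleus : {set T} :=
  [set y | [forall x, forall z, mul (mul x y) z == mul x (mul y z)]].

End LoopDefs.

From mathcomp Require Import all_boot zify.
Set Implicit Arguments. Unset Strict Implicit. Unset Printing Implicit Defensive.

(* For an elementary abelian 2-group V and a symmetric normalized
   cochain th : V x V -> GF(2), the central extension Q = V x GF(2) with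
   (a, s)(b, t) = (a + b, s + t + th(a, b)) is a commutative loop.  When the
   coboundary d(x, y, w) of th is additive in w, every inner mapping of Q is a
   shear (c, s) |-> (c, s + phi c) with phi additive, hence an automorphism, so Q
   is an A-loop; its middle nucleus is M x GF(2), with M the set of y such that
   d(., y, .) = 0.  Orthogonal sums multiply |V| and |M|, so the pairs
   (dim V - dim M, dim M) = (d, j) realized by five explicit cochains (checked by
   computation) and by the zero cochain on GF(2) generate all pairs with d >= 3,
   or with d >= 1 and j >= 1.

   If k = l the middle nucleus is the whole loop, which is then
   associative.  If l = 1 and k <= 3, the nucleus {e, n} is central with n^2 = e,
   so in coordinates 'I_m x GF(2), m = 2^(k-1), the loop is given by a symmetric
   normalized extension table; an exhaustive search over such tables, testing the
   loop axiom and the automorphism property of the maps L_{x,y}, shows that each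
   one has a middle nucleus larger than {e, n}. *)

Ltac gen_bool f :=
  repeat match goal with
  | |- context [f ?a ?b] => let t := fresh "t" in move: (f a b) => t
  | |- context [f ?a] => let t := fresh "t" in move: (f a) => t
  end.
Ltac bool_cases :=
  repeat match goal with b : _ |- _ => let _ := constr:(b : bool) in case: b end.

Definition elem2 (V : Type) (add : V -> V -> V) (z : V) : Prop :=
  [/\ associative add, commutative add, left_id z add & forall a, add a a = z].

(* A map V -> GF(2), GF(2) being modelled by (bool, xor), is additive. *)
Definition additive (V : Type) (add : V -> V -> V) (phi : V -> bool) : Prop :=
  forall c c', phi (add c c') = phi c (+) phi c'.

(* The coboundary of th: (x, y, w) |-> th(x,y) + th(x+y,w) + th(y,w) + th(x,y+w).
   It measures the failure of associativity of the extension twisted by th. *)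
Definition defect (V : Type) (add : V -> V -> V) (th : V -> V -> bool) (x y w : V) :=
  th x y (+) th (add x y) w (+) th y w (+) th x (add y w).

Record cocycle := Cocycle {
  cvec : finType;
  cadd : cvec -> cvec -> cvec;
  czero : cvec;
  ctheta : cvec -> cvec -> bool;
  cadd_elem2 : elem2 cadd czero;
  cthetaC : forall a b, ctheta a b = ctheta b a;
  ctheta0 : forall a, ctheta czero a = false;
  cdefectD : forall x y, additive cadd (defect cadd ctheta x y) }.
Arguments cadd : clear implicits.
Arguments czero : clear implicits.
Arguments ctheta : clear implicits.
Arguments cthetaC : clear implicits.
Arguments ctheta0 : clear implicits.
Arguments cdefectD : clear implicits.

Definition dnucleus (D : cocycle) : {set cvec D} :=
  [set y | [forall x, forall w, ~~ defect (cadd D) (ctheta D) x y w]].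

Section Extension.
Variable D : cocycle.
Local Notation V := (cvec D).
Local Notation add := (cadd D).
Local Notation z := (czero D).
Local Notation th := (ctheta D).
Local Notation delta := (defect add th).

Lemma addA : associative add. Proof. by case: (cadd_elem2 D). Qed.
Lemma addC : commutative add. Proof. by case: (cadd_elem2 D). Qed.
Lemma add0 : left_id z add. Proof. by case: (cadd_elem2 D). Qed.
Lemma addr0 : right_id z add. Proof. by move=> a; rewrite addC add0. Qed.
Lemma addKV a b : add a (add a b) = b.
Proof. by case: (cadd_elem2 D) => _ _ _ xx; rewrite addA xx add0. Qed.
Lemma theta0r a : th a z = false. Proof. by rewrite cthetaC ctheta0. Qed.

Lemma defect0l y w : delta z y w = false.
Proof. by rewrite /defect add0 !ctheta0; case: (th y w). Qed.

Definition ext_mul (p q : V * bool) : V * bool :=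
  (add p.1 q.1, p.2 (+) q.2 (+) th p.1 q.1).
Definition ext_one : V * bool := (z, false).

Lemma ext_mulC : is_commutative ext_mul.
Proof. by move=> [a s] [b t]; rewrite /ext_mul /= addC cthetaC (addbC s). Qed.

Lemma ext_Lt_bij p : bijective (Lt ext_mul p).
Proof.
case: p => a s; exists (fun q => (add a q.1, s (+) q.2 (+) th a (add a q.1)));
  by move=> [b t]; rewrite /Lt /ext_mul /= addKV; congr pair; gen_bool (ctheta D); bool_cases.
Qed.

Lemma ext_Lt_inj p : injective (Lt ext_mul p).
Proof. exact: bij_inj (ext_Lt_bij p). Qed.

Lemma ext_loop : is_loop ext_mul ext_one.
Proof.
split; last split; [| exact: ext_Lt_bij |].
  by move=> [a s]; rewrite /ext_mul /= add0 addr0 ctheta0 theta0r !addbF.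
by move=> p; apply: (eq_bij (ext_Lt_bij p)) => q; exact: ext_mulC.
Qed.

Lemma ext_reassoc q p w :
  ext_mul q (ext_mul p w) = ext_mul (ext_mul q p) (w.1, w.2 (+) delta q.1 p.1 w.1).
Proof.
case: p q w => [a s] [b t] [c u]; rewrite /ext_mul /defect /= addA.
by congr pair; gen_bool (ctheta D); bool_cases.
Qed.

Lemma ext_assocE p q r :
  (ext_mul (ext_mul p q) r == ext_mul p (ext_mul q r)) = ~~ delta p.1 q.1 r.1.
Proof.
case: p q r => [a s] [b t] [c u]; rewrite /ext_mul /defect /= addA xpair_eqE eqxx /=.
by gen_bool (ctheta D); bool_cases.
Qed.

Definition shear (phi : V -> bool) (p : V * bool) : V * bool := (p.1, p.2 (+) phi p.1).
Definition is_shear (f : V * bool -> V * bool) : Prop :=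
  exists phi, additive add phi /\ f =1 shear phi.

Lemma shearK phi : involutive (shear phi).
Proof. by move=> [c s]; rewrite /shear /= -addbA addbb addbF. Qed.

Lemma shear_comp f g : is_shear f -> is_shear g -> is_shear (f \o g).
Proof.
move=> [phi [Aphi Ef]] [psi [Apsi Eg]].
exists (fun c => phi c (+) psi c); split.
  by move=> c c'; rewrite Aphi Apsi addbACA.
by move=> [c s]; rewrite /= Eg Ef /shear /= addbAC addbA.
Qed.

Lemma shear_finv f : is_shear f -> is_shear (finv f).
Proof.
move=> [phi [Aphi Ef]]; exists phi; split => // p.
have fK : cancel f f by move=> q; rewrite !Ef shearK.
by rewrite -{1}(fK p) (finv_f (can_inj fK)) Ef.
Qed.

Lemma shear_aut f : is_shear f -> is_automorphism ext_mul f.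
Proof.
move=> [phi [Aphi Ef]]; split.
  by exists f => q; rewrite !Ef shearK.
move=> [a s] [b t]; rewrite !Ef /shear /ext_mul /= Aphi; congr pair.
by gen_bool phi; gen_bool (ctheta D); bool_cases.
Qed.

Lemma Lxy_shear p q : Lxy ext_mul p q =1 shear (delta q.1 p.1).
Proof.
move=> w; rewrite /Lxy /=.
have -> : Lt ext_mul q (Lt ext_mul p w) =
          Lt ext_mul (ext_mul q p) (shear (delta q.1 p.1) w) by exact: ext_reassoc.
exact: (finv_f (@ext_Lt_inj (ext_mul q p))).
Qed.

Lemma Rxy_shear p q : Rxy ext_mul p q =1 shear (delta q.1 p.1).
Proof.
have Rt_inj r : injective (Rt ext_mul r).
  by move=> u v; rewrite /Rt !(ext_mulC _ r); exact: ext_Lt_inj.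
move=> w; rewrite /Rxy /=.
have -> : Rt ext_mul q (Rt ext_mul p w) =
          Rt ext_mul (ext_mul p q) (shear (delta q.1 p.1) w).
  by rewrite /Rt (ext_mulC w) (ext_mulC _ q) ext_reassoc ext_mulC (ext_mulC q).
exact: (finv_f (@Rt_inj (ext_mul p q))).
Qed.

Lemma Tx_shear p : Tx ext_mul p =1 shear (fun _ => false).
Proof.
move=> w; rewrite /Tx /= /Rt ext_mulC (finv_f (@ext_Lt_inj p)).
by case: w => c s; rewrite /shear addbF.
Qed.

Lemma inner_shear f : inner_map ext_mul f -> is_shear f.
Proof.
elim=> {f} [p q | p q | p | | f g _ ? _ ? | f _ ?].
- by exists (delta q.1 p.1); split; [exact: cdefectD | exact: Lxy_shear].
- by exists (delta q.1 p.1); split; [exact: cdefectD | exact: Rxy_shear].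
- by exists (fun _ => false); split; [by [] | exact: Tx_shear].
- by exists (fun _ => false); split => // w; rewrite /shear addbF; case: w.
- exact: shear_comp.
- exact: shear_finv.
Qed.

Theorem ext_Aloop : is_Aloop ext_mul ext_one.
Proof. by split; [exact: ext_loop | move=> f /inner_shear/shear_aut]. Qed.

Lemma ext_nucleus : middle_nucleus ext_mul = [set p | p.1 \in dnucleus D].
Proof.
apply/setP => p; rewrite !inE; apply/forallP/forallP => Hp x; apply/forallP => w.
  by have /forallP/(_ (w, false)) := Hp (x, false); rewrite ext_assocE.
by have /forallP/(_ w.1) := Hp x.1; rewrite ext_assocE.
Qed.

Lemma card_ext_nucleus : #|middle_nucleus ext_mul| = 2 * #|dnucleus D|.
Proof.
rewrite ext_nucleus (_ : [set p | _] = setX (dnucleus D) [set: bool]).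
  by rewrite cardsX cardsT card_bool mulnC.
by apply/setP => -[a s]; rewrite !inE andbT.
Qed.
End Extension.

Lemma elem2_pair A B (f : A -> A -> A) (g : B -> B -> B) za zb :
  elem2 f za -> elem2 g zb ->
  elem2 (fun p q => (f p.1 q.1, g p.2 q.2)) (za, zb).
Proof.
case=> fA fC f0 fxx [gA gC g0 gxx]; split.
- by move=> [a b] [c d] [e h]; rewrite /= fA gA.
- by move=> [a b] [c d]; rewrite /= fC gC.
- by move=> [a b]; rewrite /= f0 g0.
- by move=> [a b]; rewrite /= fxx gxx.
Qed.

Lemma elem2_bool : elem2 addb false.
Proof. by split; [exact: addbA | exact: addbC | exact: addFb | exact: addbb]. Qed.

Section Sum.
Variables D1 D2 : cocycle.
Definition sum_add (p q : cvec D1 * cvec D2) := (cadd D1 p.1 q.1, cadd D2 p.2 q.2).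
Definition sum_theta (p q : cvec D1 * cvec D2) := ctheta D1 p.1 q.1 (+) ctheta D2 p.2 q.2.

Lemma sum_defect x y w : defect sum_add sum_theta x y w =
  defect (cadd D1) (ctheta D1) x.1 y.1 w.1 (+) defect (cadd D2) (ctheta D2) x.2 y.2 w.2.
Proof. by rewrite /defect /sum_theta /=; gen_bool (ctheta D1); gen_bool (ctheta D2); bool_cases. Qed.

Lemma sum_defectD x y : additive sum_add (defect sum_add sum_theta x y).
Proof.
move=> c c'; rewrite !sum_defect /= !cdefectD.
by gen_bool (defect (cadd D1) (ctheta D1) x.1 y.1);
   gen_bool (defect (cadd D2) (ctheta D2) x.2 y.2); bool_cases.
Qed.

Lemma sum_thetaC a b : sum_theta a b = sum_theta b a.
Proof. by rewrite /sum_theta cthetaC (cthetaC D2). Qed.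

Lemma sum_theta0 a : sum_theta (czero D1, czero D2) a = false.
Proof. by rewrite /sum_theta /= !ctheta0. Qed.

Definition sum_cocycle : cocycle :=
  @Cocycle (cvec D1 * cvec D2)%type sum_add (czero D1, czero D2) sum_theta
    (elem2_pair (cadd_elem2 D1) (cadd_elem2 D2)) sum_thetaC sum_theta0 sum_defectD.

Lemma sum_dnucleus : dnucleus sum_cocycle = setX (dnucleus D1) (dnucleus D2).
Proof.
apply/setP => -[y1 y2]; rewrite inE in_setX !inE; apply/idP/andP.
- move=> /forallP H; split; apply/forallP => x; apply/forallP => w.
  + by have /forallP/(_ (w, czero D2)) := H (x, czero D2); rewrite /= sum_defect defect0l addbF.
  + by have /forallP/(_ (czero D1, w)) := H (czero D1, x); rewrite /= sum_defect defect0l.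
- case=> /forallP H1 /forallP H2; apply/forallP => x; apply/forallP => w.
  rewrite /= sum_defect.
  by have /forallP/(_ w.1)/negbTE -> := H1 x.1; have /forallP/(_ w.2)/negbTE -> := H2 x.2.
Qed.
End Sum.

Definition bool_cocycle : cocycle :=
  @Cocycle bool addb false (fun _ _ => false) elem2_bool
    (fun _ _ => erefl) (fun _ => erefl) (fun _ _ _ _ => erefl).

Lemma bool_dnucleus : dnucleus bool_cocycle = setT.
Proof. by apply/setP => y; rewrite !inE; apply/forallP => x; apply/forallP. Qed.

Definition realizable (d j : nat) : Prop :=
  exists D : cocycle, #|cvec D| = 2 ^ (d + j) /\ #|dnucleus D| = 2 ^ j.

Lemma realizable_sum d j d' j' :
  realizable d j -> realizable d' j' -> realizable (d + d') (j + j').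
Proof.
move=> [D1 [V1 M1]] [D2 [V2 M2]]; exists (sum_cocycle D1 D2); split.
  by rewrite card_prod V1 V2 -expnD; congr (2 ^ _); lia.
by rewrite sum_dnucleus cardsX M1 M2 -expnD.
Qed.

Lemma realizable_center d j : realizable d j -> realizable d j.+1.
Proof.
move=> H; have -> : j.+1 = j + 1 by rewrite addn1.
rewrite -[d]addn0; apply: realizable_sum H _.
by exists bool_cocycle; rewrite bool_dnucleus cardsT card_bool.
Qed.

Lemma realizable_centers d j i : realizable d j -> realizable d (j + i).
Proof. by elim: i => [|i IH] H; rewrite ?addn0 // addnS; apply/realizable_center/IH. Qed.

Record fspace := FSpace {
  fvec : finType;
  fadd : fvec -> fvec -> fvec;
  fzero : fvec;
  felems : seq fvec;
  fgens : seq fvec;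
  fdecomp : fvec -> seq fvec;
  fadd_elem2 : elem2 fadd fzero;
  felemsP : forall x, x \in felems;
  fdecompE : forall c, foldr fadd fzero (fdecomp c) = c;
  fdecomp_gens : forall c, all (mem fgens) (fdecomp c) }.
Arguments fadd : clear implicits.
Arguments fzero : clear implicits.
Arguments felems : clear implicits.
Arguments fgens : clear implicits.
Arguments fdecomp : clear implicits.
Arguments felemsP : clear implicits.
Arguments fdecompE : clear implicits.
Arguments fdecomp_gens : clear implicits.

Section FSpaceProd.
Variables S1 S2 : fspace.
Local Notation z1 := (fzero S1).
Local Notation z2 := (fzero S2).
Definition prod_add (p q : fvec S1 * fvec S2) := (fadd S1 p.1 q.1, fadd S2 p.2 q.2).
Definition prod_decomp (p : fvec S1 * fvec S2) :=
  [seq (g, z2) | g <- fdecomp S1 p.1] ++ [seq (z1, g) | g <- fdecomp S2 p.2].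

Lemma prod_elemsP p : p \in [seq (a, b) | a <- felems S1, b <- felems S2].
Proof. by case: p => a b; apply: allpairs_f; apply: felemsP. Qed.

Lemma prod_decompE p : foldr prod_add (z1, z2) (prod_decomp p) = p.
Proof.
case: (fadd_elem2 S1) (fadd_elem2 S2) => A1 C1 a0 _ [A2 _ b0 _].
have foldr_add (s : seq (fvec S1 * fvec S2)) t :
    foldr prod_add t s = prod_add (foldr prod_add (z1, z2) s) t.
  elim: s => [|u s IH] /=; first by rewrite /prod_add /= a0 b0; case: t.
  by rewrite IH /prod_add /= A1 A2.
have sum1 s : foldr prod_add (z1, z2) [seq (g, z2) | g <- s] = (foldr (fadd S1) z1 s, z2).
  by elim: s => //= g s ->; rewrite /prod_add /= b0.
have sum2 s : foldr prod_add (z1, z2) [seq (z1, g) | g <- s] = (z1, foldr (fadd S2) z2 s).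
  by elim: s => //= g s ->; rewrite /prod_add /= a0.
rewrite /prod_decomp foldr_cat foldr_add sum1 sum2 !fdecompE /prod_add /= b0 C1 a0.
by case: p.
Qed.

Lemma prod_decomp_gens p :
  all (mem ([seq (g, z2) | g <- fgens S1] ++ [seq (z1, g) | g <- fgens S2])) (prod_decomp p).
Proof.
rewrite all_cat !all_map; apply/andP; split; apply/allP => g Hg /=; rewrite mem_cat.
  by apply/orP; left; apply: map_f; exact: (allP (fdecomp_gens S1 p.1)).
by apply/orP; right; apply: map_f; exact: (allP (fdecomp_gens S2 p.2)).
Qed.

Definition prod_fspace : fspace :=
  @FSpace (fvec S1 * fvec S2)%type prod_add (z1, z2)
    [seq (a, b) | a <- felems S1, b <- felems S2]
    ([seq (g, z2) | g <- fgens S1] ++ [seq (z1, g) | g <- fgens S2]) prod_decomp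
    (elem2_pair (fadd_elem2 S1) (fadd_elem2 S2)) prod_elemsP prod_decompE prod_decomp_gens.
End FSpaceProd.

Definition bool_decomp (b : bool) : seq bool := if b then [:: true] else [::].
Lemma bool_elemsP b : b \in [:: false; true]. Proof. by case: b. Qed.
Lemma bool_decompE b : foldr addb false (bool_decomp b) = b. Proof. by case: b. Qed.
Lemma bool_decomp_gens b : all (mem [:: true]) (bool_decomp b). Proof. by case: b. Qed.

Definition bool_fspace : fspace :=
  @FSpace bool addb false [:: false; true] [:: true] bool_decomp elem2_bool
    bool_elemsP bool_decompE bool_decomp_gens.

Definition F2 := prod_fspace bool_fspace bool_fspace.
Definition F3 := prod_fspace bool_fspace F2.
Definition F4 := prod_fspace bool_fspace F3.
Definition F5 := prod_fspace bool_fspace F4.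

Lemma fspace_additive (S : fspace) (phi : fvec S -> bool) :
  phi (fzero S) = false ->
  (forall c g, g \in fgens S -> phi (fadd S c g) = phi c (+) phi g) ->
  additive (fadd S) phi.
Proof.
case: (fadd_elem2 S) => A C a0 _ phi0 phi_gen c c'.
rewrite -(fdecompE S c'); elim: (fdecomp S c') (fdecomp_gens S c') => [|g s IH] /=.
  by rewrite phi0 addbF C a0.
case/andP => Hg /IH {}IH.
by rewrite (C g) A !(phi_gen _ _ Hg) IH addbA.
Qed.

Section CheckedCocycle.
Variables (S : fspace) (th : fvec S -> fvec S -> bool).
Local Notation elems := (felems S).
Local Notation add := (fadd S).
Local Notation delta := (defect add th).

Definition cocycle_check : bool :=
  [&& all (fun a => all (fun b => th a b == th b a) elems) elems,
      all (fun a => ~~ th (fzero S) a) elems &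
      all (fun x => all (fun y => all (fun c => all (fun g =>
        delta x y (add c g) == delta x y c (+) delta x y g) (fgens S)) elems) elems) elems].

Hypothesis th_ok : cocycle_check.

Lemma checked_thetaC a b : th a b = th b a.
Proof.
by case/and3P: th_ok => /allP/(_ a (felemsP S a))/allP/(_ b (felemsP S b))/eqP.
Qed.

Lemma checked_theta0 a : th (fzero S) a = false.
Proof.
by case/and3P: th_ok => _ /allP/(_ a (felemsP S a))/negbTE.
Qed.

Lemma checked_defectD x y : additive add (delta x y).
Proof.
apply: fspace_additive => [|c g Hg].
  rewrite /defect; case: (fadd_elem2 S) => _ C a0 _.
  rewrite (C y) a0 (checked_thetaC _ (fzero S)) (checked_thetaC y) !checked_theta0.
  by case: (th x y).
case/and3P: th_ok => _ _ /allP/(_ x (felemsP S x))/allP/(_ y (felemsP S y)).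
by move=> /allP/(_ c (felemsP S c))/allP/(_ g Hg)/eqP.
Qed.

Definition checked_cocycle : cocycle :=
  @Cocycle (fvec S) add (fzero S) th (fadd_elem2 S)
    checked_thetaC checked_theta0 checked_defectD.

Definition has_defect (y : fvec S) : bool :=
  has (fun x => has (fun w => delta x y w) elems) elems.

Definition nucleus_check (ys : seq (fvec S)) : bool :=
  uniq ys && all (fun y => (y \in ys) == ~~ has_defect y) elems.

Lemma checked_dnucleus ys : nucleus_check ys -> #|dnucleus checked_cocycle| = size ys.
Proof.
case/andP => Uys /allP Hys; rewrite -(card_uniqP Uys).
apply: eq_card => y; rewrite !inE (eqP (Hys y (felemsP S y))) /has_defect.
apply/forallP/hasPn => [H x _ | H x].
  by apply/hasPn => w _; have /forallP := H x; apply.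
by apply/forallP => w; move: (H x (felemsP S x)) => /hasPn; apply; exact: felemsP.
Qed.
End CheckedCocycle.

(* Explicit cocycles, given as cubic forms over GF(2); thetaDJ lives on GF(2)^D
   and has a defect nucleus of dimension J. *)
Definition theta21 (x y : fvec F2) : bool :=
  let: (x0, x1) := x in let: (y0, y1) := y in
  (x0 && y0 && y1) (+) (x0 && x1 && y0).

Definition theta30 (x y : fvec F3) : bool :=
  let: (x0, (x1, x2)) := x in let: (y0, (y1, y2)) := y in
  (x0 && y0 && y1) (+) (x0 && x1 && y0) (+) (x0 && y1 && y2) (+) (x1 && x2 && y0) (+)
  (x1 && x2 && y2) (+) (x2 && y1 && y2).

Definition theta31 (x y : fvec F3) : bool :=
  let: (x0, (x1, x2)) := x in let: (y0, (y1, y2)) := y in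
  (x0 && y1 && y2) (+) (x1 && x2 && y0).

Definition theta40 (x y : fvec F4) : bool :=
  let: (x0, (x1, (x2, x3))) := x in let: (y0, (y1, (y2, y3))) := y in
  (x0 && y0 && y2) (+) (x0 && x2 && y0) (+) (x0 && y1 && y2) (+) (x1 && x2 && y0) (+)
  (x1 && y2) (+) (x2 && y1) (+) (x1 && y1 && y2) (+) (x1 && x2 && y1) (+)
  (x2 && y2 && y3) (+) (x2 && x3 && y2) (+) (x1 && x3 && y2) (+) (x2 && y1 && y3).

Definition theta50 (x y : fvec F5) : bool :=
  let: (x0, (x1, (x2, (x3, x4)))) := x in let: (y0, (y1, (y2, (y3, y4)))) := y in
  (x0 && y3) (+) (x3 && y0) (+) (x0 && y2 && y3) (+) (x2 && x3 && y0) (+) (x1 && y1) (+)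
  (x2 && y2) (+) (x3 && y4) (+) (x4 && y3) (+) (x0 && x1 && y1) (+) (x1 && y0 && y1) (+)
  (x0 && x2 && y2) (+) (x2 && y0 && y2) (+) (x0 && x3 && y1) (+) (x1 && y0 && y3) (+)
  (x0 && x3 && y4) (+) (x4 && y0 && y3) (+) (x0 && x4 && y2) (+) (x2 && y0 && y4) (+)
  (x1 && x2 && y3) (+) (x3 && y1 && y2) (+) (x1 && x3 && y4) (+) (x4 && y1 && y3).

Lemma theta21_ok : cocycle_check theta21. Proof. by vm_compute. Qed.
Lemma theta30_ok : cocycle_check theta30. Proof. by vm_compute. Qed.
Lemma theta31_ok : cocycle_check theta31. Proof. by vm_compute. Qed.
Lemma theta40_ok : cocycle_check theta40. Proof. by vm_compute. Qed.
Lemma theta50_ok : cocycle_check theta50. Proof. by vm_compute. Qed.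

Lemma theta21_nucleus : nucleus_check theta21 [:: (false, false); (false, true)].
Proof. by vm_compute. Qed.
Lemma theta31_nucleus : nucleus_check theta31 [:: (false, (false, false)); (true, (false, false))].
Proof. by vm_compute. Qed.
Lemma theta30_nucleus : nucleus_check theta30 [:: fzero F3]. Proof. by vm_compute. Qed.
Lemma theta40_nucleus : nucleus_check theta40 [:: fzero F4]. Proof. by vm_compute. Qed.
Lemma theta50_nucleus : nucleus_check theta50 [:: fzero F5]. Proof. by vm_compute. Qed.

Lemma realizable_checked (S : fspace) (th : fvec S -> fvec S -> bool)
    (th_ok : cocycle_check th) (ys : seq (fvec S)) d j :
  #|fvec S| = 2 ^ (d + j) -> nucleus_check th ys -> size ys = 2 ^ j -> realizable d j.
Proof. by move=> HV HM Hys; exists (checked_cocycle th_ok); rewrite (checked_dnucleus th_ok HM). Qed.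

Lemma realizable11 : realizable 1 1.
Proof.
by apply: (realizable_checked theta21_ok _ theta21_nucleus); rewrite ?card_prod ?card_bool.
Qed.
Lemma realizable21 : realizable 2 1.
Proof.
by apply: (realizable_checked theta31_ok _ theta31_nucleus); rewrite ?card_prod ?card_bool.
Qed.

(* For every d >= 3 some cocycle on GF(2)^d has trivial defect nucleus:
   dimensions 3, 4, 5 are explicit and the others are sums with dimension 3. *)
Lemma realizable_large d : 3 <= d -> realizable d 0.
Proof.
have r3 : realizable 3 0.
  by apply: (realizable_checked theta30_ok _ theta30_nucleus); rewrite ?card_prod ?card_bool.
elim/ltn_ind: d => d IH Hd.
case: d IH Hd => [|[|[|[|[|[|d]]]]]] IH Hd //.
- by apply: (realizable_checked theta40_ok _ theta40_nucleus); rewrite ?card_prod ?card_bool.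
- by apply: (realizable_checked theta50_ok _ theta50_nucleus); rewrite ?card_prod ?card_bool.
change (realizable (3 + d.+3) 0).
by apply: (realizable_sum r3); apply: IH; lia.
Qed.

Lemma realizable_d1 d : 0 < d -> realizable d 1.
Proof.
case: d => [|[|[|d]]] // _; [exact: realizable11 | exact: realizable21 |].
by apply: realizable_center; apply: realizable_large.
Qed.

Lemma realizable_of_condition k l : 0 < l ->
  3 <= k - l \/ (1 <= k - l /\ 2 <= l) -> realizable (k - l) l.-1.
Proof.
move=> l_gt0 [d3 | [d1 l2]].
  by rewrite -[l.-1]add0n; apply: realizable_centers; exact: realizable_large.
have -> : l.-1 = 1 + (l - 2) by lia.
by apply: realizable_centers; exact: realizable_d1.
Qed.

Lemma associative_nucleus (T : finType) (mul : T -> T -> T) :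
  is_associative mul <-> #|middle_nucleus mul| = #|T|.
Proof.
split=> [A | H x y z].
  rewrite -cardsT; apply: eq_card => y; rewrite !inE.
  by apply/forallP => x; apply/forallP => z; rewrite A.
have : middle_nucleus mul == setT by rewrite eqEcard subsetT cardsT H leqnn.
by move/eqP/setP/(_ y); rewrite !inE => /forallP/(_ x)/forallP/(_ z)/eqP.
Qed.

Lemma realizable_loop d j : 0 < d -> realizable d j ->
  exists (T : finType) (mul : T -> T -> T) (e : T),
    is_Aloop mul e /\ is_commutative mul /\ ~ is_associative mul /\
    #|T| = 2 ^ (d + j).+1 /\ #|middle_nucleus mul| = 2 ^ j.+1.
Proof.
move=> d_gt0 [D [HV HM]].
have cardT : #|{: cvec D * bool}| = 2 ^ (d + j).+1 by rewrite card_prod HV card_bool expnSr.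
have cardN : #|middle_nucleus (ext_mul (D:=D))| = 2 ^ j.+1 by rewrite card_ext_nucleus HM expnS.
exists (cvec D * bool)%type, (ext_mul (D:=D)), (ext_one D).
split; first exact: ext_Aloop.
split; first exact: ext_mulC.
split; last by split.
by move/associative_nucleus; rewrite cardT cardN => /eqP; rewrite eqn_exp2l // => /eqP; lia.
Qed.

Lemma aut_nucleus (T : finType) (mul : T -> T -> T) f y :
  is_automorphism mul f -> y \in middle_nucleus mul -> f y \in middle_nucleus mul.
Proof.
case=> [[g fK gK] f_mul]; rewrite !inE => /forallP Hy.
apply/forallP => x; apply/forallP => z; rewrite -(gK x) -(gK z) -!f_mul.
by move/forallP: (Hy (g x)) => /(_ (g z))/eqP ->.
Qed.

Section AutomorphicLoop.
Variables (T : finType) (mul : T -> T -> T) (e : T).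
Hypothesis HA : is_Aloop mul e.

Lemma Aloop_mul1 x : mul e x = x. Proof. by case: HA => [[H _] _]; case: (H x). Qed.
Lemma Aloop_mulr1 x : mul x e = x. Proof. by case: HA => [[H _] _]; case: (H x). Qed.
Lemma Aloop_Lt_bij x : bijective (Lt mul x). Proof. by case: HA => [[_ [H _]] _]. Qed.
Lemma Aloop_Lt_inj x : injective (Lt mul x). Proof. exact: bij_inj (Aloop_Lt_bij x). Qed.

Lemma LxyP x y u : mul (mul y x) (Lxy mul x y u) = mul y (mul x u).
Proof. exact: (f_finv (@Aloop_Lt_inj (mul y x))). Qed.

Lemma Lxy_morph x y u v : Lxy mul x y (mul u v) = mul (Lxy mul x y u) (Lxy mul x y v).
Proof. by case: HA => _ /(_ _ (inner_L mul x y)) [_ ->]. Qed.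

Lemma Lxy_unit x y : Lxy mul x y e = e.
Proof. by apply: (@Aloop_Lt_inj (mul y x)); rewrite /Lt LxyP !Aloop_mulr1. Qed.
End AutomorphicLoop.
Arguments Aloop_Lt_inj {T mul e} HA x [x1 x2].

(* Short-circuiting versions of [all] and [has]: under the call-by-value
   strategy of [vm_compute] the library versions traverse the whole list. *)
Fixpoint lazy_all (T : Type) (a : T -> bool) (s : seq T) : bool :=
  if s is x :: s' then (if a x then lazy_all a s' else false) else true.
Fixpoint lazy_has (T : Type) (a : T -> bool) (s : seq T) : bool :=
  if s is x :: s' then (if a x then true else lazy_has a s') else false.

Lemma lazy_allP (T : eqType) (a : pred T) (s : seq T) :
  reflect {in s, forall x, a x} (lazy_all a s).
Proof.
by rewrite (_ : lazy_all a s = all a s); [exact: allP | elim: s => //= x s ->; case: (a x)].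
Qed.

Lemma lazy_hasP (T : eqType) (a : pred T) (s : seq T) :
  reflect (exists2 x, x \in s & a x) (lazy_has a s).
Proof.
by rewrite (_ : lazy_has a s = has a s); [exact: hasP | elim: s => //= x s ->; case: (a x)].
Qed.

(* Check P on every word of length n over s, without building the list of words. *)
Fixpoint all_words (C : Type) (s : seq C) (n : nat) (P : seq C -> bool) : bool :=
  if n is n'.+1 then lazy_all (fun x => all_words s n' (fun w => P (x :: w))) s else P [::].

Lemma all_wordsP (C : eqType) (s : seq C) n P w :
  all_words s n P -> size w = n -> all (mem s) w -> P w.
Proof.
elim: n P w => [|n IH] P [|x w] //= /lazy_allP Hall [Hw] /andP [Hx Hws].
exact: (IH (fun w => P (x :: w))) (Hall x Hx) Hw Hws.
Qed.

(* The ordinals of 'I_m, listed by a function that [vm_compute] can evaluate. *)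
Definition ord_opt (m i : nat) : option 'I_m :=
  (if i < m as b return (i < m) = b -> option 'I_m
   then fun H => Some (Ordinal H) else fun _ => None) erefl.
Definition ord_seq (m : nat) : seq 'I_m := pmap (ord_opt m) (iota 0 m).

Lemma mem_ord_seq m (i : 'I_m) : i \in ord_seq m.
Proof.
have opt_i : ord_opt m i = Some i.
  case: i => i Hi; rewrite /ord_opt /=; move: (erefl (i < m)); rewrite {2 3}Hi => H.
  by congr Some; apply: val_inj.
by rewrite mem_pmap; apply/mapP; exists (val i); rewrite ?mem_iota ?ltn_ord.
Qed.

Section ListChecks.
Variables (C : Type) (eqc : C -> C -> bool) (cs : seq C) (op : C -> C -> C).

Definition latin_on : bool :=
  lazy_all (fun p => lazy_all (fun t => lazy_has (fun q => eqc (op p q) t) cs) cs) cs.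

Definition ldiv_on (a b : C) : C := nth b cs (find (fun w => eqc (op a w) b) cs).
Definition inner_L_on (x y u : C) : C := ldiv_on (op y x) (op y (op x u)).

Definition lookup (L : seq C) (p : C) : C := nth p L (find (eqc p) cs).

Definition innerL_hom_on : bool :=
  lazy_all (fun x => lazy_all (fun y =>
    let L := [seq inner_L_on x y u | u <- cs] in
    lazy_all (fun u => lazy_all (fun v =>
      eqc (lookup L (op u v)) (op (lookup L u) (lookup L v))) cs) cs) cs) cs.

Definition mid_nuc_on (y : C) : bool :=
  lazy_all (fun x => lazy_all (fun z => eqc (op (op x y) z) (op x (op y z))) cs) cs.
End ListChecks.

Section Transport.
Variables (T : finType) (mul : T -> T -> T) (e : T).
Hypothesis HA : is_Aloop mul e.
Variables (C : eqType) (eqc : C -> C -> bool) (cs : seq C) (op : C -> C -> C) (F : C -> T).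
Hypotheses (eqcE : forall p q, eqc p q = (p == q)) (csP : forall p, p \in cs).
Hypotheses (F_bij : bijective F) (F_op : forall p q, F (op p q) = mul (F p) (F q)).

Let F_inj : injective F := bij_inj F_bij.

Lemma latin_transport : latin_on eqc cs op.
Proof.
apply/lazy_allP => p _; apply/lazy_allP => t _; apply/lazy_hasP.
have [g _ gK] := Aloop_Lt_bij HA (F p); have [Fi _ FiK] := F_bij.
exists (Fi (g (F t))); rewrite ?csP // eqcE; apply/eqP/F_inj.
by rewrite F_op FiK; exact: gK.
Qed.

Lemma inner_L_transport x y u : F (inner_L_on eqc cs op x y u) = Lxy mul (F x) (F y) (F u).
Proof.
have [Fi _ FiK] := F_bij; rewrite /inner_L_on /ldiv_on.
set P := fun w => eqc (op (op y x) w) (op y (op x u)).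
have HP : has P cs.
  apply/hasP; exists (Fi (Lxy mul (F x) (F y) (F u))); rewrite ?csP // /P eqcE.
  by apply/eqP/F_inj; rewrite !F_op FiK (LxyP HA).
have := nth_find (op y (op x u)) HP; rewrite /P eqcE => /eqP/(congr1 F); rewrite !F_op.
by rewrite -(LxyP HA (F x) (F y) (F u)) => H; apply: (Aloop_Lt_inj HA (mul (F y) (F x))).
Qed.

Lemma lookup_map (f : C -> C) p : lookup eqc cs [seq f u | u <- cs] p = f p.
Proof.
rewrite /lookup (_ : find (eqc p) cs = index p cs).
  by rewrite (nth_map p) ?nth_index ?index_mem ?csP.
by apply: eq_find => q; rewrite eqcE eq_sym.
Qed.

Lemma innerL_hom_transport : innerL_hom_on eqc cs op.
Proof.
apply/lazy_allP => x _; apply/lazy_allP => y _.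
apply/lazy_allP => u _; apply/lazy_allP => v _.
by rewrite !lookup_map eqcE; apply/eqP/F_inj; rewrite F_op !inner_L_transport F_op (Lxy_morph HA).
Qed.

Lemma mid_nuc_transport y : mid_nuc_on eqc cs op y -> F y \in middle_nucleus mul.
Proof.
have [Fi _ FiK] := F_bij.
move=> /lazy_allP Hy; rewrite inE; apply/forallP => X; apply/forallP => Z.
rewrite -(FiK X) -(FiK Z).
have /lazy_allP/(_ (Fi Z) (csP _)) := Hy (Fi X) (csP _).
by rewrite eqcE => /eqP/(congr1 F); rewrite !F_op => ->.
Qed.
End Transport.

(* A table g : 'I_m -> 'I_m -> 'I_m x GF(2)
   defines (i, s)(j, t) = ((g i j).1, (g i j).2 + s + t); it is normalized when
   g 0 j = (j, 0), and a symmetric normalized table is encoded by its entries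
   on the pairs 0 < i <= j, listed by [upper_pairs]. *)
Section Tables.
Variable m : nat.
Local Notation cell := ('I_m * bool)%type.

Definition cell_eq (p q : cell) : bool :=
  if val p.1 == val q.1 then (if p.2 then q.2 else ~~ q.2) else false.

Lemma cell_eqE p q : cell_eq p q = (p == q).
Proof.
case: p q => [i s] [j t]; rewrite /cell_eq xpair_eqE /= -val_eqE.
by case: (val i == val j); case: s; case: t.
Qed.

Definition cells (os : seq 'I_m) : seq cell := [seq (i, s) | i <- os, s <- [:: false; true]].

Definition upper_pairs (os : seq 'I_m) : seq ('I_m * 'I_m) :=
  [seq ij <- [seq (i, j) | i <- os, j <- os] | (0 < val ij.1) && (val ij.1 <= val ij.2)].

Definition pos_pred (i j : 'I_m) (ij : 'I_m * 'I_m) : bool :=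
  if val ij.1 == val i then val ij.2 == val j else
  if val ij.1 == val j then val ij.2 == val i else false.

Definition sym_table (A : Type) (up : seq ('I_m * 'I_m)) (border : 'I_m -> A)
    (vs : seq A) (i j : 'I_m) : A :=
  if val i == 0 then border j else if val j == 0 then border i else
  nth (border i) vs (find (pos_pred i j) up).

Definition ext_table (g : 'I_m -> 'I_m -> cell) (p q : cell) : cell :=
  let r := g p.1 q.1 in (r.1, r.2 (+) p.2 (+) q.2).

Definition rows_distinct (os : seq 'I_m) (g : 'I_m -> 'I_m -> 'I_m) : bool :=
  lazy_all (fun i => lazy_all (fun j => lazy_all (fun j' =>
    if val j < val j' then val (g i j) != val (g i j') else true) os) os) os.

(* The table with entries vs is not a commutative A-loop with middle nucleus
   inside {(0, 0), (0, 1)}. *)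
Definition refutes (up : seq ('I_m * 'I_m)) (cs : seq cell) (vs : seq cell) : bool :=
  let op := ext_table (sym_table up (fun i => (i, false)) vs) in
  if ~~ latin_on cell_eq cs op then true else
  if ~~ innerL_hom_on cell_eq cs op then true else
  lazy_has (fun p => if val p.1 != 0 then mid_nuc_on cell_eq cs op p else false) cs.
End Tables.
Arguments cell_eq {m}.

(* First coordinates ks are enumerated
   before the bits bs, so that most candidates are discarded cheaply. *)
Definition no_table (m : nat) : bool :=
  let os := ord_seq m in let up := upper_pairs os in let cs := cells os in
  all_words os (size up) (fun ks =>
    if ~~ rows_distinct os (sym_table up id ks) then true else
    all_words [:: false; true] (size up) (fun bs => refutes up cs (zip ks bs))).

Lemma no_table2 : no_table 2. Proof. by vm_compute. Qed.
Lemma no_table4 : no_table 4. Proof. by vm_compute. Qed.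

Section TablesTheory.
Variable m : nat.
Local Notation cell := ('I_m * bool)%type.
Local Notation os := (ord_seq m).
Local Notation up := (upper_pairs os).
Local Notation cs := (cells os).

Lemma mem_cells (p : cell) : p \in cs.
Proof. by case: p => i s; apply: allpairs_f; rewrite ?mem_ord_seq //; case: s. Qed.

Lemma sym_table_map A (border : 'I_m -> A) (H : 'I_m -> 'I_m -> A) :
  (forall i j, H i j = H j i) -> (forall i j, val i = 0 -> H i j = border j) ->
  forall i j, sym_table up border [seq H ij.1 ij.2 | ij <- up] i j = H i j.
Proof.
move=> Hsym H0 i j; rewrite /sym_table.
have [i0|i_ne0] := eqVneq (val i) 0; first by rewrite H0.
have [j0|j_ne0] := eqVneq (val j) 0; first by rewrite Hsym H0.
have up_has : has (pos_pred i j) up.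
  apply/hasP; case: (leqP (val i) (val j)) => [le_ij | lt_ji].
    exists (i, j); last by rewrite /pos_pred !eqxx.
    by rewrite mem_filter /= lt0n i_ne0 le_ij; apply: allpairs_f; exact: mem_ord_seq.
  exists (j, i); last by rewrite /pos_pred /= !eqxx; case: eqP => [->|].
  by rewrite mem_filter /= lt0n j_ne0 ltnW //; apply: allpairs_f; exact: mem_ord_seq.
rewrite (nth_map (i, i)) -?has_find //.
move: (nth_find (i, i) up_has); case: (nth _ _ _) => a b; rewrite /pos_pred /=.
case: eqP => [/val_inj -> /eqP/val_inj -> // | _].
by case: eqP => // /val_inj -> /eqP/val_inj ->.
Qed.

Lemma rows_distinct_inj (g : 'I_m -> 'I_m -> 'I_m) :
  (forall i, injective (g i)) -> rows_distinct os g.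
Proof.
move=> g_inj; apply/lazy_allP => i _; apply/lazy_allP => j _; apply/lazy_allP => j' _.
case: ltnP => // lt_jj'; apply/eqP => /val_inj/g_inj Ejj'.
by move: lt_jj'; rewrite Ejj' ltnn.
Qed.

Definition table_op (G : 'I_m -> 'I_m -> cell) : cell -> cell -> cell :=
  ext_table (sym_table up (fun i => (i, false)) [seq G ij.1 ij.2 | ij <- up]).

Lemma table_opE G : (forall i j, G i j = G j i) ->
  (forall i j, val i = 0 -> G i j = (j, false)) -> table_op G =2 ext_table G.
Proof. by move=> Gsym G0 p q; rewrite /table_op /ext_table sym_table_map. Qed.

Lemma no_tableP (G : 'I_m -> 'I_m -> cell) : no_table m ->
  (forall i j, G i j = G j i) -> (forall i j, val i = 0 -> G i j = (j, false)) ->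
  (forall i, injective (fun j => (G i j).1)) ->
  latin_on cell_eq cs (table_op G) -> innerL_hom_on cell_eq cs (table_op G) ->
  exists2 p : cell, val p.1 != 0 & mid_nuc_on cell_eq cs (table_op G) p.
Proof.
move=> search Gsym G0 G_inj latin hom.
pose ks := [seq (G ij.1 ij.2).1 | ij <- up]; pose bs := [seq (G ij.1 ij.2).2 | ij <- up].
have ksE i j : sym_table up id ks i j = (G i j).1.
  apply: (sym_table_map (H := fun i j => (G i j).1)) => [i' j' | i' j' i0].
    by rewrite Gsym.
  by rewrite G0.
have rows : rows_distinct os (sym_table up id ks).
  by apply: rows_distinct_inj => i j j'; rewrite !ksE; exact: G_inj.
have all_gens : all (mem os) ks by apply/allP => k _; exact: mem_ord_seq.
have := all_wordsP (w := ks) search (size_map _ _) all_gens; rewrite rows.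
have all_bools : all (mem [:: false; true]) bs by apply/allP => -[].
move=> /(all_wordsP (w := bs))/(_ (size_map _ _) all_bools).
have -> : zip ks bs = [seq G ij.1 ij.2 | ij <- up].
  by rewrite zip_map; apply: eq_map => ij /=; case: (G _ _).
rewrite /refutes -/(table_op G) latin hom.
by move=> /lazy_hasP [p _]; case: ifP => // p_ne0 Hp; exists p.
Qed.
End TablesTheory.

Section NucleusOfOrderTwo.
Variables (T : finType) (mul : T -> T -> T) (e n : T).
Hypotheses (HA : is_Aloop mul e) (HC : is_commutative mul).
Hypotheses (Hn : n \in middle_nucleus mul) (Hne : n != e)
  (HN : forall y, y \in middle_nucleus mul -> y = e \/ y = n).

Local Notation mul1 := (Aloop_mul1 HA).
Local Notation mulr1 := (Aloop_mulr1 HA).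

Lemma n_middle x z : mul (mul x n) z = mul x (mul n z).
Proof. by move: Hn; rewrite inE => /forallP/(_ x)/forallP/(_ z)/eqP. Qed.

(* Each L_{x,y} is an automorphism, so it permutes {e, n} fixing e: it fixes n. *)
Lemma n_right x y : mul (mul y x) n = mul y (mul x n).
Proof.
have Haut := HA.2 _ (inner_L mul x y).
case: (HN (aut_nucleus Haut Hn)) => H.
  case: Haut => /bij_inj Linj _; case/eqP: Hne; apply: Linj.
  by rewrite H (Lxy_unit HA).
by rewrite -{1}H (LxyP HA).
Qed.

(* n^2 is in the nucleus and differs from n, so n^2 = e; hence n is central. *)
Lemma n_sqr : mul n n = e.
Proof.
have : mul n n \in middle_nucleus mul.
  rewrite inE; apply/forallP => x; apply/forallP => z; apply/eqP.
  by rewrite -n_right !n_middle.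
case/HN => // nn_n; case/eqP: Hne; apply: (Aloop_Lt_inj HA n).
by rewrite /Lt nn_n mulr1.
Qed.

Lemma mul_nn x : mul (mul x n) n = x. Proof. by rewrite n_right n_sqr mulr1. Qed.
Lemma mul_n_left x y : mul (mul x n) y = mul (mul x y) n.
Proof. by rewrite n_middle (HC n y) n_right. Qed.
Lemma mul_n_right x y : mul x (mul y n) = mul (mul x y) n. Proof. by rewrite n_right. Qed.

Definition cosets (rs : seq T) : seq T := flatten [seq [:: r; mul r n] | r <- rs].

Lemma size_cosets rs : size (cosets rs) = (size rs).*2.
Proof. by elim: rs => //= r rs IH; rewrite IH doubleS. Qed.

Lemma nth_cosets rs i (s : bool) : i < size rs ->
  nth e (cosets rs) (s + i.*2) = if s then mul (nth e rs i) n else nth e rs i.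
Proof.
elim: rs i => // r rs IH [|i] /= Hi; first by case: (s).
by rewrite doubleS !addnS /= IH.
Qed.

Lemma cosets_rcons rs r : cosets (rcons rs r) = cosets rs ++ [:: r; mul r n].
Proof. by rewrite /cosets -cats1 map_cat flatten_cat. Qed.

Lemma cosets_closed rs x : x \in cosets rs -> mul x n \in cosets rs.
Proof.
elim: rs => //= r rs IH; rewrite !inE => /or3P [/eqP -> | /eqP -> | /IH ->].
- by rewrite eqxx orbT.
- by rewrite mul_nn eqxx.
- by rewrite !orbT.
Qed.

Lemma transversal m : 0 < m -> m.*2 <= #|T| ->
  exists rs, [/\ size rs = m, nth e rs 0 = e & uniq (cosets rs)].
Proof.
elim: m => // -[|m] IH _ Hm.
  exists [:: e]; split => //=.
  by rewrite mul1 inE eq_sym Hne.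
have [|rs [Hs H0 Hu]] := IH isT; first by apply: leq_trans Hm; rewrite leq_double.
have [r Hr] : exists r, r \notin cosets rs.
  apply/existsP; rewrite -negb_forall; apply/negP => /forallP all_in.
  have : #|T| <= size (cosets rs).
    by apply: leq_trans (card_size _); apply: subset_leq_card; apply/subsetP => x _; exact: all_in.
  by rewrite size_cosets Hs leqNgt (leq_trans _ Hm) // ltn_double.
have Hrn : mul r n \notin cosets rs.
  by apply: contra Hr => /cosets_closed; rewrite mul_nn.
have r_rn : r != mul r n.
  apply/negP => /eqP r_eq; case/eqP: Hne; apply: (Aloop_Lt_inj HA r).
  by rewrite /Lt -r_eq mulr1.
exists (rcons rs r); split.
- by rewrite size_rcons Hs.
- by rewrite nth_rcons Hs.
- by rewrite cosets_rcons cat_uniq Hu /= (negbTE Hr) (negbTE Hrn) !inE (negbTE r_rn).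
Qed.

(* Coordinates: with representatives rs of the m cosets of {e, n}, the map
   (i, s) |-> r_i n^s is a bijection 'I_m x GF(2) -> T carrying an extension table. *)
Section Coordinates.
Variables (m : nat) (rs : seq T).
Hypotheses (Hrs : size rs = m) (Hr0 : nth e rs 0 = e) (Hu : uniq (cosets rs)).
Hypothesis HT : #|T| = m.*2.

Definition coord (p : 'I_m * bool) : T := nth e (cosets rs) (p.2 + (val p.1).*2).

Lemma coordE i s : coord (i, s) = if s then mul (nth e rs i) n else nth e rs i.
Proof. by rewrite /coord nth_cosets // Hrs; exact: ltn_ord. Qed.

Lemma coord_shift i s b : coord (i, s (+) b) = if b then mul (coord (i, s)) n else coord (i, s).
Proof. by rewrite !coordE; case: b; case: s; rewrite /= ?mul_nn. Qed.

Lemma coord_inj : injective coord.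
Proof.
move=> [i s] [j t] /eqP; rewrite /coord nth_uniq ?size_cosets ?Hrs //=; last first.
- by rewrite (@leq_trans j.+1.*2) ?leq_double // doubleS; case: t.
- by rewrite (@leq_trans i.+1.*2) ?leq_double // doubleS; case: s.
move=> /eqP E; have st : s = t.
  by move: (congr1 odd E); rewrite !oddD !odd_double !addbF !oddb.
by rewrite st; congr pair; apply: val_inj; move: (congr1 half E); rewrite st !half_bit_double.
Qed.

Lemma coord_bij : bijective coord.
Proof.
by apply: inj_card_bij coord_inj _; rewrite card_prod card_ord card_bool muln2 HT.
Qed.

Lemma coord_zero i s : val i = 0 -> coord (i, s) = if s then n else e.
Proof. by move=> i0; rewrite coordE i0 Hr0 mul1; case: s. Qed.

Lemma coord_nucleus p : coord p \in middle_nucleus mul -> val p.1 = 0.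
Proof.
pose i0 : 'I_m := Ordinal (leq_ltn_trans (leq0n _) (ltn_ord p.1)).
case/HN => Hp; [move: (coord_zero false (erefl : val i0 = 0)) |
                move: (coord_zero true (erefl : val i0 = 0))].
all: by rewrite -Hp => /coord_inj <-.
Qed.

Lemma coordinate_table : exists G : 'I_m -> 'I_m -> 'I_m * bool,
  [/\ forall p q, coord (ext_table G p q) = mul (coord p) (coord q),
      forall i j, G i j = G j i,
      forall i j, val i = 0 -> G i j = (j, false) &
      forall i, injective (fun j => (G i j).1)].
Proof.
have [ci coordK ciK] := coord_bij.
pose G i j := ci (mul (coord (i, false)) (coord (j, false))).
have G_mul p q : coord (ext_table G p q) = mul (coord p) (coord q).
  case: p q => [i s] [j t]; rewrite /ext_table /= !coord_shift -surjective_pairing ciK.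
  rewrite -(addFb s) -(addFb t) !coord_shift.
  case: s; case: t => /=; last by [].
  + by rewrite [RHS]mul_n_left mul_n_right.
  + by rewrite mul_n_left.
  + by rewrite mul_n_right.
exists G; split => //.
- by move=> i j; rewrite /G HC.
- by move=> i j i0; rewrite /G coord_zero // mul1 coordK.
move=> i j j' /= E.
have : ext_table G (i, false) (j', (G i j).2 (+) (G i j').2) = ext_table G (i, false) (j, false).
  by rewrite /ext_table /= -E; congr pair; case: (G i j).2; case: (G i j').2.
by move/(congr1 coord); rewrite !G_mul => /(Aloop_Lt_inj HA)/coord_inj [].
Qed.
End Coordinates.

(* With |T| = 2m, a successful search [no_table m] is contradictory: the
   coordinate table of T would pass it, yielding a nucleus element (i, s), i <> 0. *)
Lemma no_loop_of_order m : no_table m -> #|T| = m.*2 -> False.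
Proof.
move=> search HT.
have m_gt0 : 0 < m.
  have : 0 < #|T| by apply/card_gt0P; exists e.
  by rewrite HT double_gt0.
have [rs [Hs H0 Hu]] := transversal m_gt0 (eq_leq (esym HT)).
have [G [G_mul Gsym G0 G_inj]] := coordinate_table Hs H0 Hu HT.
have F_bij := coord_bij Hs Hu HT.
have F_op p q : coord rs (table_op G p q) = mul (coord rs p) (coord rs q).
  by rewrite table_opE.
have [p p_ne0 nuc] := no_tableP search Gsym G0 G_inj
  (latin_transport HA (@cell_eqE m) (@mem_cells m) F_bij F_op)
  (innerL_hom_transport HA (@cell_eqE m) (@mem_cells m) F_bij F_op).
move: (mid_nuc_transport (@cell_eqE m) (@mem_cells m) F_bij F_op nuc).
by move/(coord_nucleus Hs H0 Hu)/eqP; rewrite (negbTE p_ne0).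
Qed.
End NucleusOfOrderTwo.

Lemma no_Aloop_nucleus2 (T : finType) (mul : T -> T -> T) (e : T) m :
  is_Aloop mul e -> is_commutative mul -> #|middle_nucleus mul| = 2 ->
  no_table m -> #|T| = m.*2 -> False.
Proof.
move=> HA HC N2.
have e_nuc : e \in middle_nucleus mul.
  rewrite inE; apply/forallP => x; apply/forallP => z.
  by rewrite (Aloop_mulr1 HA) (Aloop_mul1 HA).
have [n Nn] : exists n, middle_nucleus mul :\ e = [set n].
  by apply/cards1P; move: N2; rewrite (cardsD1 e) e_nuc add1n => -[] ->.
have : n \in middle_nucleus mul :\ e by rewrite Nn set11.
rewrite in_setD1 => /andP [n_ne_e n_nuc].
apply: (no_loop_of_order HA HC n_nuc n_ne_e) => y y_nuc.
have [-> | y_ne_e] := eqVneq y e; [by left | right].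
by apply/set1P; rewrite -Nn in_setD1 y_ne_e.
Qed.

Theorem lemma4p6 (k l : nat) (hl : 0 < l) (hlk : l <= k) :
  (exists (T : finType) (mul : T -> T -> T) (e : T),
      is_Aloop mul e /\ is_commutative mul /\ ~ is_associative mul /\
      #|T| = 2 ^ k /\ #|middle_nucleus mul| = 2 ^ l)
  <-> (3 <= k - l \/ (1 <= k - l /\ 2 <= l)).
Proof.
split.
- move=> [T [mul [e [HA [HC [nonassoc [HT HN]]]]]]].
  have lt_lk : l < k.
    rewrite ltn_neqAle hlk andbT; apply/eqP => lk; apply: nonassoc.
    by apply/associative_nucleus; rewrite HN HT lk.
  have [d3 | d_small] := leqP 3 (k - l); first by left.
  have [l2 | l1] := leqP 2 l; first by right; split; lia.
  have N2 : #|middle_nucleus mul| = 2 by rewrite HN (_ : l = 1) //; lia.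
  have [k2 | k3] : k = 2 \/ k = 3 by lia.
  + by case: (no_Aloop_nucleus2 HA HC N2 no_table2); rewrite HT k2.
  + by case: (no_Aloop_nucleus2 HA HC N2 no_table4); rewrite HT k3.
- move=> cond.
  have d_gt0 : 0 < k - l by case: cond => [|[]]; lia.
  have [T [mul [e [HA [HC [nonassoc [HT HN]]]]]]] :=
    realizable_loop d_gt0 (realizable_of_condition hl cond).
  exists T, mul, e; do 3!split => //; split.
  + by rewrite HT; congr (2 ^ _); lia.
  + by rewrite HN prednK.
Qed.
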